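(* Let $\ell,n,d_0\in\mathbb{N}$ and $d=d_0+2\ell$. Let $X\in\{-1,1\}^{n\times d_0}$, let $\mathbf{P}$ be a uniformly random $d\times d$ permutation matrix, and let $\mathbf{Y}=\mathsf{PAP}_{n,d_0,\ell}(X,\mathbf{P})$. Let $\mathsf{M}\colon\{-1,1\}^{n\times d}\to[-1,1]^d$ be a mechanism such that for every $Y$ in the support of $\mathbf{Y}$, $\mathsf{M}(Y)$ strongly-agrees with $Y$ (with probability 1). Then the random vector $(\mathsf{M}(\mathbf{Y})\cdot\mathbf{P}^T)^{1,\dots,d_0}$ (the first $d_0$ coordinates of the row vector $\mathsf{M}(\mathbf{Y})\mathbf{P}^T$) is strongly-correlated with $X$.
   Context: $\mathsf{PAP}_{n,d_0,\ell}(X,P)=X''\cdot P$, where $X''\in\{-1,1\}^{n\times d}$ is obtained from $X$ by appending $\ell$ columns with all entries $1$ and $\ell$ columns with all entries $-1$ (after the $d_0$ original columns), and $P$ is a $d\times d$ permutation matrix (permuting columns). For a matrix $Z$ and $b\in\{-1,1\}$, $\mathcal{J}_Z^b$ is the set of columns all of whose entries equal $b$. A vector $q$ strongly-agrees with $Z$ if for both $b$, $|\{j\in\mathcal{J}_Z^b:q^j=b\}|\ge0.9|\mathcal{J}_Z^b|$. A random vector $Q\in[-1,1]^{d_0}$ is strongly-correlated with $X$ if for all $b\in\{-1,1\}$ and $j\in\mathcal{J}_X^b$, $\Pr[Q^j=b]\ge0.9$ (probability over $\mathbf{P}$ and $\mathsf{M}$'s coins). *)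

From HB Require Import structures.
From mathcomp Require Import all_boot all_order all_algebra all_fingroup.
From mathcomp Require Import all_classical all_reals all_analysis.
Set Implicit Arguments. Unset Strict Implicit. Unset Printing Implicit Defensive.
Import Order.TTheory GRing.Theory Num.Theory.
Local Open Scope ring_scope.

Definition pm1_mx (R : numDomainType) m k (Z : 'M[R]_(m, k)) : Prop :=
  forall i j, Z i j = 1 \/ Z i j = -1.

Definition pad_mx (R : numDomainType) n d0 l (X : 'M[R]_(n, d0))
  : 'M[R]_(n, d0 + (l + l)) :=
  row_mx X (row_mx (const_mx 1) (const_mx (-1))).

Definition PAP (R : numDomainType) n d0 l (X : 'M[R]_(n, d0))
  (s : 'S_(d0 + (l + l))) : 'M[R]_(n, d0 + (l + l)) :=
  pad_mx l X *m perm_mx s.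

Definition Jcols (R : numDomainType) m k (Z : 'M[R]_(m, k)) (b : R) : {set 'I_k} :=
  [set j | [forall i, Z i j == b]].

Definition strongly_agrees (R : numFieldType) m k (q : 'rV[R]_k) (Z : 'M[R]_(m, k))
  : Prop :=
  forall b : R, (b = 1 \/ b = -1) ->
    (9 / 10 : R) * (#|Jcols Z b|)%:R <= (#|[set j in Jcols Z b | q ord0 j == b]|)%:R :> R.

From HB Require Import structures.
From mathcomp Require Import all_boot all_order all_algebra all_fingroup.
From mathcomp Require Import all_classical all_reals all_analysis.
From mathcomp Require Import measurable_realfun.
Import Order.TTheory GRing.Theory Num.Theory.
Local Open Scope ring_scope.
Local Open Scope classical_set_scope.

(* Swapping two columns of X'' that are both constantly b leaves X'' unchanged,
   so the uniform permutation makes the probability that M answers b at the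
   image of a constant-b column the same for all such columns.  Almost surely
   at least 9/10 of the constant-b columns are answered with b, hence by
   linearity of expectation the average of these equal probabilities, and so
   each of them, is at least 9/10; the padded column j of X is one of them. *)

Lemma mul_perm_mxE {R : pzSemiRingType} {m k} (A : 'M[R]_(m, k)) (s : 'S_k) i c :
  (A *m perm_mx s) i (s c) = A i c.
Proof. by rewrite -[s in perm_mx s]invgK -col_permE mxE permK. Qed.

Lemma mul_tr_perm_mxE {R : pzSemiRingType} {m k} (A : 'M[R]_(m, k)) (s : 'S_k) i c :
  (A *m (perm_mx s)^T) i c = A i (s c).
Proof. by rewrite tr_perm_mx -col_permE mxE. Qed.

Lemma mul_tperm_mx_id {R : pzSemiRingType} {m k} (A : 'M[R]_(m, k)) (a c : 'I_k) :
  col a A = col c A -> A *m perm_mx (tperm a c) = A.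
Proof.
move=> /matrixP Aac; apply/matrixP => i x.
have Aiac : A i a = A i c by have := Aac i 0; rewrite !mxE.
rewrite -[tperm a c]invgK -col_permE mxE tpermV.
by case: tpermP => [->|->|].
Qed.

Lemma Jcols_mul_perm_mx {R : numDomainType} {m k} (A : 'M[R]_(m, k)) (s : 'S_k) b :
  Jcols (A *m perm_mx s) b = s @: Jcols A b.
Proof.
apply/setP => j; rewrite -[j](permKV s) mem_imset; last exact: perm_inj.
by rewrite !inE; apply: eq_forallb => i; rewrite mul_perm_mxE.
Qed.

Lemma Jcols_col_eq {R : numDomainType} {m k} {A : 'M[R]_(m, k)} {b a c} :
  a \in Jcols A b -> c \in Jcols A b -> col a A = col c A.
Proof.
rewrite !inE => /forallP Aa /forallP Ac; apply/matrixP => i j.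
by rewrite !mxE (eqP (Aa i)) (eqP (Ac i)).
Qed.

Lemma mem_Jcols_pad_lshift {R : numDomainType} {n d0} l (X : 'M[R]_(n, d0)) b j :
  (lshift (l + l) j \in Jcols (pad_mx l X) b) = (j \in Jcols X b).
Proof. by rewrite !inE; apply: eq_forallb => i; rewrite /pad_mx row_mxEl. Qed.

Lemma Jcols_PAP {R : numDomainType} {n d0 l} (X : 'M[R]_(n, d0)) s b :
  Jcols (PAP X s) b = s @: Jcols (pad_mx l X) b.
Proof. exact: Jcols_mul_perm_mx. Qed.

Lemma PAP_tpermM {R : numDomainType} {n d0 l} (X : 'M[R]_(n, d0)) s a c :
  col a (pad_mx l X) = col c (pad_mx l X) -> PAP X (tperm a c * s)%g = PAP X s.
Proof. by move=> Xac; rewrite /PAP perm_mxM mulmxA mul_tperm_mx_id. Qed.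

Lemma sum_perm_tperm_swap {V : nmodType} {k} (F : 'S_k -> 'I_k -> V) (a c : 'I_k) :
  (forall s, F (tperm a c * s)%g = F s) -> \sum_s F s (s a) = \sum_s F s (s c).
Proof.
move=> Finv; rewrite (reindex_inj (mulgI (tperm a c))).
by apply: eq_bigr => s _; rewrite Finv permM tpermL.
Qed.

Lemma mean_ge_double_count {R : numFieldType} {I J : finType} (K : {set J})
    (f : I -> J -> R) (i0 : I) (a : J) (t : R) :
  a \in K -> (forall c, c \in K -> \sum_i f i c = \sum_i f i a) ->
  (forall i, t * #|K|%:R <= \sum_(c in K) f i c) ->
  t <= #|I|%:R^-1 * \sum_i f i a.
Proof.
move=> aK fK tK.
have K_gt0 : 0 < #|K|%:R :> R by rewrite ltr0n; apply/card_gt0P; exists a.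
have I_gt0 : 0 < #|I|%:R :> R by rewrite ltr0n; apply/card_gt0P; exists i0.
have sums : \sum_(i : I) t * #|K|%:R <= \sum_(c in K) \sum_i f i a.
  by rewrite -(eq_bigr _ fK) exchange_big; exact: ler_sum.
rewrite (ler_pdivlMl _ _ I_gt0) -(ler_pM2r K_gt0) -mulrA.
by rewrite [leLHS]mulr_natl [leRHS]mulr_natr; move: sums; rewrite !sumr_const.
Qed.

Lemma natr_card_sum_indic {R : pzRingType} {T : Type} {I : finType} (K : {set I})
    (E : I -> set T) w :
  #|[set i in K | w \in E i]|%:R = \sum_(i in K) \1_(E i) w :> R.
Proof.
rewrite -sum1_card natr_sum [LHS]big_mkcond [RHS]big_mkcond /=.
by apply: eq_bigr => i _; rewrite inE indicE; case: (i \in K); case: (w \in E i).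
Qed.

Lemma measurable_preimage1 {R : realType} {d} {T : measurableType d} (f : T -> R) v :
  measurable_fun setT f -> measurable [set w | f w = v].
Proof. by move=> /(_ measurableT [set v] (measurable_set1 v)); rewrite setTI. Qed.

Lemma measurable_card_ge {R : realType} {d} {T : measurableType d} {I : finType}
    (K : {set I}) (E : I -> set T) (t : R) :
  (forall i, measurable (E i)) -> measurable [set w | t <= #|[set i in K | w \in E i]|%:R].
Proof.
move=> mE.
have mcount : measurable_fun setT (fun w => \sum_(i <- enum K) \1_(E i) w : R).
  by apply: measurable_sum => i; exact: measurable_indic.
have := mcount measurableT `[t, +oo[%classic (measurable_itv _).
rewrite setTI; congr measurable; apply/seteqP; split => w /=;
  by rewrite in_itv /= andbT natr_card_sum_indic big_enum.
Qed.

Lemma agreeing_colsE {R : numDomainType} {T : Type} {k} (J : {set 'I_k})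
    (q : T -> 'rV[R]_k) b w :
  [set j in J | w \in [set w | q w ord0 j = b]] = [set j in J | q w ord0 j == b].
Proof. by apply/setP => j; rewrite !inE; congr andb; apply/idP/eqP; rewrite inE. Qed.

Lemma sum_measure_ge_card {R : realType} {d} {T : measurableType d}
    (P : {measure set T -> \bar R}) {I : finType} (K : {set I}) (E : I -> set T)
    (A : set T) (t : R) :
  0 <= t -> measurable A -> P A = 1%E -> (forall i, measurable (E i)) ->
  (forall w, A w -> t <= #|[set i in K | w \in E i]|%:R) ->
  (t%:E <= \sum_(i in K) P (E i))%E.
Proof.
move=> t_ge0 mA PA1 mE tA.
have mindic (B : set T) : measurable B -> measurable_fun setT (fun w => (\1_B w)%:E : \bar R).
  by move=> mB; apply/measurable_EFinP; exact: measurable_indic.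
have -> : (\sum_(i in K) P (E i) =
           \int[P]_w (\sum_(i <- enum K) (\1_(E i) w)%:E))%E.
  rewrite ge0_integral_sum //; last by move=> i; exact: mindic.
  by rewrite big_enum; apply: eq_bigr => i _; rewrite integral_indic ?setIT.
have -> : t%:E = (\int[P]_w (t%:E * (\1_A w)%:E))%E.
  rewrite ge0_integralZl_EFin //; last exact: mindic.
  by rewrite integral_indic // setIT PA1 mule1.
apply: (ge0_le_integral P measurableT).
- by move=> w _; rewrite mule_ge0.
- by apply: emeasurable_funM => //; exact: mindic.
- by apply: emeasurable_sum => i; exact: mindic.
move=> w _; rewrite -EFinM sumEFin lee_fin big_enum -natr_card_sum_indic indicE.
by case: (boolP (w \in A)) => [/set_mem/tA|_]; rewrite ?mulr1 ?mulr0.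
Qed.

Lemma measurable_strongly_agrees {R : realType} {d} {T : measurableType d} {m k}
    (Z : 'M[R]_(m, k)) (q : T -> 'rV[R]_k) :
  (forall j, measurable_fun setT (fun w => q w ord0 j)) ->
  measurable [set w | strongly_agrees (q w) Z].
Proof.
move=> mq.
pose agree_at b := [set w | 9 / 10 * #|Jcols Z b|%:R <=
  #|[set j in Jcols Z b | w \in [set w | q w ord0 j = b]]|%:R :> R].
have -> : [set w | strongly_agrees (q w) Z] = agree_at 1 `&` agree_at (-1).
  apply/seteqP; split => w /=.
  - by move=> agree; split; rewrite /agree_at /= agreeing_colsE; apply: agree; [left|right].
  - by move=> [agree1 agreeN1] b [->|->]; rewrite -agreeing_colsE.
by apply: measurableI; apply: measurable_card_ge => j; exact: measurable_preimage1.
Qed.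

Lemma sum_measure_agree_ge {R : realType} {d} {T : measurableType d}
    (P : {measure set T -> \bar R}) {m k} (Z : 'M[R]_(m, k)) (q : T -> 'rV[R]_k) (b : R) :
  (forall j, measurable_fun setT (fun w => q w ord0 j)) ->
  P [set w | strongly_agrees (q w) Z] = 1%E -> b = 1 \/ b = -1 ->
  ((9 / 10 * #|Jcols Z b|%:R)%:E <= \sum_(j in Jcols Z b) P [set w | q w ord0 j = b])%E.
Proof.
move=> mq Pagree b_pm1.
apply: (sum_measure_ge_card P _ (fun j => [set w | q w ord0 j = b]) _ _ _
  (measurable_strongly_agrees Z q mq) Pagree).
- by rewrite mulr_ge0.
- by move=> j; exact: measurable_preimage1.
by move=> w; rewrite agreeing_colsE; apply.
Qed.

(* M Y w is the output of M on input Y with coins w drawn from mu; the uniform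
   P = perm_mx s is accounted for by averaging over s. *)
Theorem lemma6p2 (R : realType) (l n d0 : nat)
  (dm : measure_display) (Omega : measurableType dm) (mu : probability Omega R)
  (X : 'M[R]_(n, d0)) (HX : pm1_mx X)
  (M : 'M[R]_(n, d0 + (l + l)) -> Omega -> 'rV[R]_(d0 + (l + l)))
  (Mmeas : forall Y j, measurable_fun setT (fun w => M Y w ord0 j))
  (Mrange : forall Y w j, -1 <= M Y w ord0 j <= 1)
  (Magree : forall s : 'S_(d0 + (l + l)),
     mu [set w | strongly_agrees (M (PAP X s) w) (PAP X s)] = 1%E) :
  forall (b : R), (b = 1 \/ b = -1) ->
  forall j : 'I_d0, j \in Jcols X b ->
    ((9 / 10)%:E <=
     ((#|'S_(d0 + (l + l))|%:R)^-1)%:E *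
       \sum_(s : 'S_(d0 + (l + l)))
          mu [set w | (M (PAP X s) w *m (perm_mx s)^T) ord0 (lshift (l + l) j) = b])%E.
Proof.
move=> b b_pm1 j Xj.
set a := lshift (l + l) j.
set K := Jcols (pad_mx l X) b.
pose p s c := fine (mu [set w | M (PAP X s) w ord0 c = b]).
have muE s c : mu [set w | M (PAP X s) w ord0 c = b] = (p s c)%:E.
  by rewrite fineK // fin_num_measure //; exact: measurable_preimage1.
have aK : a \in K by rewrite mem_Jcols_pad_lshift.
have exchangeable c : c \in K -> \sum_s p s (s c) = \sum_s p s (s a).
  move=> cK; apply: sum_perm_tperm_swap => s.
  by rewrite /p PAP_tpermM //; exact: Jcols_col_eq cK aK.
have agree s : 9 / 10 * #|K|%:R <= \sum_(c in K) p s (s c).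
  have := sum_measure_agree_ge mu (PAP X s) (M (PAP X s)) b (Mmeas _) (Magree s) b_pm1.
  rewrite Jcols_PAP big_imset /=; last exact: in2W perm_inj.
  under eq_bigr do rewrite muE.
  by rewrite sumEFin lee_fin card_imset //; exact: perm_inj.
have eventE s : [set w | (M (PAP X s) w *m (perm_mx s)^T) ord0 a = b] =
                [set w | M (PAP X s) w ord0 (s a) = b].
  by apply: eq_set => w; rewrite mul_tr_perm_mxE.
under eq_bigr do rewrite eventE muE.
rewrite sumEFin -EFinM lee_fin.
exact: (mean_ge_double_count K (fun s c => p s (s c)) 1%g a).
Qed.
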